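(* For every $t\in[0,1)$ the operator $C_t\colon H(\mathbb{D})\to H(\mathbb{D})$ is continuous. Moreover, the set $\{C_t : t\in[0,1)\}$ is equicontinuous in $\mathcal{L}(H(\mathbb{D}))$.
   Context: $\mathbb{D}=\{z\in\mathbb{C}:|z|<1\}$ and $H(\mathbb{D})$ is the space of holomorphic functions on $\mathbb{D}$ endowed with the topology of uniform convergence on compact subsets of $\mathbb{D}$ (a Fréchet space). $\mathcal{L}(H(\mathbb{D}))$ denotes the continuous linear operators on $H(\mathbb{D})$. For $t\in[0,1]$ the generalized Cesàro operator $C_t$ is defined on $f\in H(\mathbb{D})$ by $C_tf(0)=f(0)$ and $C_tf(z)=\frac{1}{z}\int_0^z\frac{f(\xi)}{1-t\xi}\,d\xi$ for $z\in\mathbb{D}\setminus\{0\}$. *)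

From Stdlib Require Import Reals.
From Coquelicot Require Import Coquelicot.
Open Scope R_scope.

Definition in_disc (z : C) : Prop := Cmod z < 1.

Definition holo_disc (f : C -> C) : Prop :=
  forall z : C, in_disc z ->
    @ex_derive C_AbsRing C_NormedModule f z.

(* line integral of g along the segment [0, z]:
   int_0^z g(xi) dxi = int_0^1 g(s z) z ds *)
Definition seg_integral (g : C -> C) (z : C) : C :=
  @RInt C_R_CompleteNormedModule (fun s : R => Cmult z (g (RtoC s * z)%C)) 0 1.

Definition cesaro (t : R) (f : C -> C) (z : C) : C :=
  if Req_EM_T (Cmod z) 0 then f 0%C
  else (/ z * seg_integral (fun xi => f xi / (1 - RtoC t * xi)) z)%C.

(* Topology of uniform convergence on compact subsets of D on H(D):
   every compact subset of D lies in a closed disc {|z| <= r}, r < 1,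
   so a set V is a neighbourhood of f in H(D) iff it contains, for some
   0 <= r < 1 and eps > 0, all g in H(D) with sup_{|z|<=r} |g z - f z| <= eps. *)
Definition hd_nbhd (f : C -> C) (V : (C -> C) -> Prop) : Prop :=
  exists r eps : R, 0 <= r < 1 /\ 0 < eps /\
    forall g : C -> C, holo_disc g ->
      (forall z : C, Cmod z <= r -> Cmod (g z - f z)%C <= eps) -> V g.

Definition maps_HD (T : (C -> C) -> (C -> C)) : Prop :=
  forall f, holo_disc f -> holo_disc (T f).

Definition linear_HD (T : (C -> C) -> (C -> C)) : Prop :=
  (forall f g, holo_disc f -> holo_disc g -> forall z, in_disc z ->
     T (fun w => f w + g w)%C z = (T f z + T g z)%C) /\
  (forall (a : C) f, holo_disc f -> forall z, in_disc z ->
     T (fun w => a * f w)%C z = (a * T f z)%C).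

Definition continuous_HD (T : (C -> C) -> (C -> C)) : Prop :=
  forall f, holo_disc f -> forall V, hd_nbhd (T f) V ->
    exists U, hd_nbhd f U /\ forall g, holo_disc g -> U g -> V (T g).

Definition equicontinuous_HD (I : Type) (P : I -> Prop)
    (T : I -> (C -> C) -> (C -> C)) : Prop :=
  forall V, hd_nbhd (fun _ => 0%C) V ->
    exists U, hd_nbhd (fun _ => 0%C) U /\
      forall i g, P i -> holo_disc g -> U g -> V (T i g).

From Stdlib Require Import Reals Lra Lia.
From Coquelicot Require Import Coquelicot.
Open Scope R_scope.

(* For z <> 0, C_t f(z) is the mean (1/z) \int_[0,z] h of h(xi) = f(xi)/(1 - t xi) along the
   radius [0,z].  By Goursat's theorem (quadrisect a triangle, keep the quarter with the largest
   integral, and compare h with its tangent map at the limit point) the integral of the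
   holomorphic h over every triangle in the disc vanishes, so z |-> \int_[0,z] h is a primitive
   of h and the mean is holomorphic away from 0; at 0 it is differentiable because h is.
   Continuity, uniformly in t, comes from |1 - t xi| >= 1 - r for |xi| <= r, which gives
   sup_{|z|<=r} |C_t g - C_t f| <= sup_{|z|<=r} |g - f| / (1 - r). *)

(* Coquelicot states identities between integrals in the carrier of a normed module; [ring]
   and [field] only recognise them at type [C]. *)
Ltac eq_in_C := match goal with |- ?A = ?B => change (@eq C A B) end.

Lemma RtoC_2_neq_0 : RtoC 2 <> 0%C.
Proof. intros E. apply RtoC_inj in E. lra. Qed.

Lemma in_disc_0 : in_disc 0%C.
Proof. unfold in_disc. rewrite Cmod_0. lra. Qed.

Lemma is_derive_C_iff (f : C -> C) (z l : C) :
  @is_derive C_AbsRing C_NormedModule f z l <->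
  (forall e, 0 < e -> exists d, 0 < d /\ forall y, Cmod (y - z) < d ->
     Cmod (f y - f z - (y - z) * l) <= e * Cmod (y - z)).
Proof.
  split.
  - intros [_ Hf] e He.
    destruct (Hf z (fun P HP => HP) (mkposreal e He)) as [d Hd].
    exists d; split; [apply cond_pos | exact Hd].
  - intros Hf; split; [apply is_linear_scal_l |].
    intros x Hx.
    apply (@is_filter_lim_locally_unique C_AbsRing (AbsRing_NormedModule C_AbsRing)) in Hx.
    subst x.
    intros eps; destruct (Hf eps (cond_pos eps)) as [d [Hd Hfd]].
    exists (mkposreal d Hd); exact Hfd.
Qed.

(* [holo_disc] uses [C_NormedModule], the product rules use [AbsRing_NormedModule C_AbsRing]. *)
Lemma is_derive_C_AbsRing_iff (f : C -> C) (z l : C) :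
  @is_derive C_AbsRing C_NormedModule f z l <->
  @is_derive C_AbsRing (AbsRing_NormedModule C_AbsRing) f z l.
Proof.
  split; intros [_ Hf]; (split; [apply is_linear_scal_l | exact Hf]).
Qed.

Lemma is_derive_Cinv (w : C) : w <> 0%C ->
  @is_derive C_AbsRing C_NormedModule Cinv w (- / (w * w))%C.
Proof.
  intros Hw. apply is_derive_C_iff. intros e He.
  assert (HW : 0 < Cmod w) by (apply Cmod_gt_0; exact Hw).
  set (W := Cmod w) in *.
  exists (Rmin (W / 2) (e * (W * W * W) / 2)).
  assert (HW3 : 0 < W * W * W) by (repeat apply Rmult_lt_0_compat; lra).
  split; [apply Rmin_pos; [lra | apply Rdiv_lt_0_compat; [nra | lra]] |].
  intros y Hy.
  assert (Hy1 : Cmod (y - w) < W / 2) by (eapply Rlt_le_trans; [exact Hy | apply Rmin_l]).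
  assert (Hy2 : Cmod (y - w) < e * (W * W * W) / 2)
    by (eapply Rlt_le_trans; [exact Hy | apply Rmin_r]).
  assert (HY : W / 2 < Cmod y).
  { assert (W <= Cmod (- (y - w)) + Cmod y).
    { unfold W. replace w with (- (y - w) + y)%C at 1 by ring. apply Cmod_triangle. }
    rewrite Cmod_opp in H. lra. }
  assert (Hy0 : y <> 0%C) by (apply Cmod_gt_0; lra).
  replace (/ y - / w - (y - w) * - / (w * w))%C with ((y - w) * (y - w) / (y * (w * w)))%C
    by (field; auto).
  rewrite Cmod_div by (repeat apply Cmult_neq_0; auto).
  rewrite !Cmod_mult. fold W.
  set (a := Cmod (y - w)) in *. set (Y := Cmod y) in *.
  assert (Ha : 0 <= a) by apply Cmod_ge_0.
  apply Rle_div_l; [apply Rmult_lt_0_compat; nra |].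
  assert (a * a <= a * (e * (W * W * W) / 2)) by (apply Rmult_le_compat_l; lra).
  assert (0 <= e * a * (W * W)) by (apply Rmult_le_pos; nra).
  nra.
Qed.

Lemma holo_disc_const_0 : holo_disc (fun _ => 0%C).
Proof.
  intros z _. exists (RtoC 0). apply is_derive_C_iff. intros e He. exists 1. split; [lra |].
  intros y _. replace (0 - 0 - (y - z) * 0)%C with (RtoC 0) by ring. rewrite Cmod_0.
  pose proof (Cmod_ge_0 (y - z)). nra.
Qed.

(* The uniform structure of [C_NormedModule] is the product one, while the domain of a
   derivative carries the Cmod balls of [C_AbsRing]; both define the same neighbourhoods. *)
Lemma ex_derive_C_continuous (h : C -> C) (z : C) :
  @ex_derive C_AbsRing C_NormedModule h z -> @continuous C_UniformSpace C_UniformSpace h z.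
Proof.
  intros Hd P HP. apply (@locally_le_locally_norm C_AbsRing C_NormedModule).
  exact (ex_derive_continuous h z Hd P HP).
Qed.

Definition continuous_disc (h : C -> C) : Prop :=
  forall z, in_disc z -> @continuous C_UniformSpace C_UniformSpace h z.

Lemma holo_disc_continuous (h : C -> C) : holo_disc h -> continuous_disc h.
Proof. intros Hh z Hz. exact (ex_derive_C_continuous h z (Hh z Hz)). Qed.

Lemma continuous_C_Cmod (h : C -> C) (w : C) :
  @continuous C_UniformSpace C_UniformSpace h w ->
  forall e, 0 < e -> exists d, 0 < d /\
    forall y, Cmod (y - w) < d -> Cmod (h y - h w) < e.
Proof.
  intros Hh e He.
  pose proof (proj1 (@filterlim_locally_ball_norm C_AbsRing C C_NormedModule
                       (locally w) _ h (h w)) Hh) as Hball.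
  destruct (@locally_norm_le_locally C_AbsRing C_NormedModule w _ (Hball (mkposreal e He)))
    as [d Hd].
  exists d; split; [apply cond_pos | intros y Hy; exact (Hd y Hy)].
Qed.

Lemma exists_pow_half_lt (K e : R) : 0 < e -> exists n : nat, K * (/ 2) ^ n < e.
Proof.
  intros He.
  destruct (pow_lt_1_zero (/ 2) ltac:(rewrite Rabs_pos_eq; lra) (e / (Rabs K + 1)))
    as [N HN]; [apply Rdiv_lt_0_compat; pose proof (Rabs_pos K); lra |].
  exists N. specialize (HN N (le_n N)).
  assert (Hpow : 0 <= (/ 2) ^ N) by (apply pow_le; lra).
  rewrite Rabs_pos_eq in HN by exact Hpow.
  apply Rle_lt_trans with (Rabs K * (/ 2) ^ N); [apply Rmult_le_compat_r; [lra | apply Rle_abs] |].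
  apply Rlt_le_trans with ((Rabs K + 1) * (e / (Rabs K + 1))); [| right; field];
    pose proof (Rabs_pos K); nra.
Qed.

Lemma geometric_cauchy_C (u : nat -> C) (K : R) :
  (forall n, Cmod (u (S n) - u n) <= K * (/ 2) ^ n) ->
  exists p : C, forall n, Cmod (p - u n) <= 2 * K * (/ 2) ^ n.
Proof.
  intros Hstep.
  assert (HK : 0 <= K).
  { specialize (Hstep O). pose proof (Cmod_ge_0 (u 1%nat - u O)%C). simpl in Hstep. lra. }
  assert (Htail : forall n k,
             Cmod (u (n + k)%nat - u n) <= 2 * K * (/ 2) ^ n - 2 * K * (/ 2) ^ (n + k)).
  { intros n k. induction k as [|k IH].
    - rewrite Nat.add_0_r, Rminus_diag. replace (u n - u n)%C with (RtoC 0) by ring.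
      rewrite Cmod_0. lra.
    - rewrite Nat.add_succ_r.
      replace (u (S (n + k)) - u n)%C
        with ((u (S (n + k)) - u (n + k)%nat) + (u (n + k)%nat - u n))%C by ring.
      eapply Rle_trans; [apply Cmod_triangle |].
      specialize (Hstep (n + k)%nat). simpl. lra. }
  assert (Hfar : forall n m, (n <= m)%nat -> Cmod (u m - u n) <= 2 * K * (/ 2) ^ n).
  { intros n m Hnm. replace m with (n + (m - n))%nat by lia.
    specialize (Htail n (m - n)%nat).
    assert (0 <= (/ 2) ^ (n + (m - n))) by (apply pow_le; lra). nra. }
  destruct (proj1 (@Hierarchy.filterlim_locally_cauchy nat C_R_CompleteNormedModule eventually
                     eventually_filter u)) as [p Hp].
  { intros eps. destruct (exists_pow_half_lt (4 * K) eps (cond_pos eps)) as [N HN].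
    exists (fun n => (N <= n)%nat). split; [exists N; auto |].
    intros n m Hn Hm. apply (@norm_compat1 R_AbsRing C_R_NormedModule).
    rewrite <- Cmod_norm. change (minus ?x ?y) with (x - y)%C.
    replace (u m - u n)%C with ((u m - u N) - (u n - u N))%C by ring.
    eapply Rle_lt_trans; [apply Cmod_triangle |]. rewrite Cmod_opp.
    pose proof (Hfar N m Hm). pose proof (Hfar N n Hn). lra. }
  exists p. intros n. apply Rnot_lt_le. intros Hlt.
  set (eps := mkposreal (Cmod (p - u n) - 2 * K * (/ 2) ^ n) ltac:(lra)).
  destruct (proj1 (@filterlim_locally_ball_norm R_AbsRing nat C_R_NormedModule eventually _ u p)
                  Hp eps) as [N HN].
  specialize (HN (Nat.max N n) (Nat.le_max_l N n)). unfold ball_norm in HN.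
  rewrite <- Cmod_norm in HN. change (minus ?x ?y) with (x - y)%C in HN.
  specialize (Hfar n (Nat.max N n) (Nat.le_max_r N n)).
  assert (Cmod (p - u n) <= Cmod (u (Nat.max N n) - p) + Cmod (u (Nat.max N n) - u n)).
  { replace (p - u n)%C with (- (u (Nat.max N n) - p) + (u (Nat.max N n) - u n))%C by ring.
    rewrite <- (Cmod_opp (u (Nat.max N n) - p)). apply Cmod_triangle. }
  simpl in HN. lra.
Qed.

(** * Integrals along segments *)

Definition line_integrand (h : C -> C) (a b : C) (s : R) : C :=
  ((b - a) * h (a + RtoC s * (b - a)))%C.

Definition line_integral (h : C -> C) (a b : C) : C :=
  @RInt C_R_CompleteNormedModule (line_integrand h a b) 0 1.

Definition midpoint (a b : C) : C := ((a + b) / 2)%C.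

Lemma midpoint_segment (a b : C) : midpoint a b = (a + RtoC (/ 2) * (b - a))%C.
Proof. unfold midpoint, Cdiv. rewrite RtoC_inv by lra. field. Qed.

Lemma Cmod_segment_le (p a b : C) (r s : R) :
  Cmod (a - p) <= r -> Cmod (b - p) <= r -> 0 <= s <= 1 ->
  Cmod (a + RtoC s * (b - a) - p) <= r.
Proof.
  intros Ha Hb Hs.
  replace (a + RtoC s * (b - a) - p)%C with (RtoC (1 - s) * (a - p) + RtoC s * (b - p))%C
    by (rewrite RtoC_minus; ring).
  eapply Rle_trans; [apply Cmod_triangle |].
  rewrite !Cmod_mult, !Cmod_R, !Rabs_pos_eq by lra. nra.
Qed.

Lemma in_disc_segment (a b : C) (s : R) :
  in_disc a -> in_disc b -> 0 <= s <= 1 -> in_disc (a + RtoC s * (b - a)).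
Proof.
  unfold in_disc; intros Ha Hb Hs.
  apply Rle_lt_trans with (Rmax (Cmod a) (Cmod b)); [| now apply Rmax_lub_lt].
  assert (E : forall x : C, (x - 0)%C = x) by (intros; ring).
  rewrite <- (E (a + RtoC s * (b - a))%C).
  apply Cmod_segment_le; rewrite ?E; [apply Rmax_l | apply Rmax_r | exact Hs].
Qed.

Lemma continuous_line_integrand (h : C -> C) (a b : C) (s : R) :
  @continuous C_UniformSpace C_UniformSpace h (a + RtoC s * (b - a))%C ->
  @continuous R_UniformSpace C_R_NormedModule (line_integrand h a b) s.
Proof.
  intros Hh.
  apply (@continuous_scal_r R_UniformSpace C_AbsRing C_NormedModule (b - a)%C
           (fun x => h (a + RtoC x * (b - a))%C)).
  apply (continuous_comp (fun x : R => (a + RtoC x * (b - a))%C) h); [| exact Hh].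
  apply (continuous_ext (fun x : R => plus a (scal x (b - a)%C))).
  { intros x. rewrite scal_R_Cmult. reflexivity. }
  apply (@continuous_plus R_UniformSpace R_AbsRing C_R_NormedModule).
  - apply continuous_const.
  - apply (@continuous_scal_l R_UniformSpace R_AbsRing C_R_NormedModule), continuous_id.
Qed.

Lemma is_RInt_Cmult_l (f : R -> C) (a b : R) (c I : C) :
  @is_RInt C_R_NormedModule f a b I ->
  @is_RInt C_R_NormedModule (fun s => (c * f s)%C) a b (c * I)%C.
Proof.
  intros H.
  pose proof (@is_RInt_fct_extend_fst R_NormedModule R_NormedModule f a b I H) as Hre.
  pose proof (@is_RInt_fct_extend_snd R_NormedModule R_NormedModule f a b I H) as Him.
  destruct c as [c1 c2], I as [i1 i2].
  apply (@is_RInt_fct_extend_pair R_NormedModule R_NormedModule); simpl.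
  - eapply is_RInt_ext;
      [| exact (is_RInt_minus _ _ a b _ _ (is_RInt_scal _ a b c1 _ Hre)
                                          (is_RInt_scal _ a b c2 _ Him))].
    intros s _. reflexivity.
  - eapply is_RInt_ext;
      [| exact (is_RInt_plus _ _ a b _ _ (is_RInt_scal _ a b c1 _ Him)
                                         (is_RInt_scal _ a b c2 _ Hre))].
    intros s _. reflexivity.
Qed.

Section LineIntegral.

Variable h : C -> C.
Hypothesis h_cont : continuous_disc h.

Lemma ex_RInt_line_integrand (a b : C) (x y : R) :
  in_disc a -> in_disc b -> 0 <= x <= 1 -> 0 <= y <= 1 ->
  @ex_RInt C_R_NormedModule (line_integrand h a b) x y.
Proof.
  intros Ha Hb Hx Hy. apply (@ex_RInt_continuous C_R_CompleteNormedModule).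
  intros s [Hs1 Hs2]. apply continuous_line_integrand, h_cont, in_disc_segment; auto.
  split; [apply Rle_trans with (Rmin x y); [apply Rmin_glb|]; lra
         | apply Rle_trans with (Rmax x y); [|apply Rmax_lub]; lra].
Qed.

Lemma line_integral_reparam (a b : C) (v w : R) :
  in_disc a -> in_disc b -> 0 <= v <= 1 -> 0 <= w <= 1 ->
  line_integral h (a + RtoC v * (b - a)) (a + RtoC w * (b - a)) =
  @RInt C_R_CompleteNormedModule (line_integrand h a b) v w.
Proof.
  intros Ha Hb Hv Hw. unfold line_integral.
  pose proof (RInt_comp_lin (V := C_R_CompleteNormedModule) (line_integrand h a b) (w - v) v 0 1)
    as E.
  replace ((w - v) * 0 + v) with v in E by ring.
  replace ((w - v) * 1 + v) with w in E by ring.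
  rewrite <- E by (apply ex_RInt_line_integrand; auto).
  apply (RInt_ext (V := C_R_CompleteNormedModule)); intros s _.
  rewrite scal_R_Cmult. unfold line_integrand.
  replace (a + RtoC v * (b - a) + RtoC s * (a + RtoC w * (b - a) - (a + RtoC v * (b - a))))%C
    with (a + RtoC ((w - v) * s + v) * (b - a))%C
    by (rewrite RtoC_plus, RtoC_mult, RtoC_minus; ring).
  rewrite RtoC_minus. eq_in_C. ring.
Qed.

Lemma line_integral_swap (a b : C) :
  in_disc a -> in_disc b -> line_integral h b a = (- line_integral h a b)%C.
Proof.
  intros Ha Hb.
  assert (E := line_integral_reparam a b 1 0 Ha Hb).
  replace (a + RtoC 1 * (b - a))%C with b in E by ring.
  replace (a + RtoC 0 * (b - a))%C with a in E by ring.
  rewrite E by lra. unfold line_integral.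
  rewrite <- (opp_RInt_swap (V := C_R_CompleteNormedModule))
    by (apply ex_RInt_line_integrand; auto; lra).
  reflexivity.
Qed.

Lemma line_integral_midpoint (a b : C) :
  in_disc a -> in_disc b ->
  line_integral h a b = (line_integral h a (midpoint a b) + line_integral h (midpoint a b) b)%C.
Proof.
  intros Ha Hb.
  assert (E1 := line_integral_reparam a b 0 (/ 2) Ha Hb).
  assert (E2 := line_integral_reparam a b (/ 2) 1 Ha Hb).
  replace (a + RtoC 0 * (b - a))%C with a in E1 by ring.
  replace (a + RtoC 1 * (b - a))%C with b in E2 by ring.
  rewrite midpoint_segment, E1, E2 by lra. unfold line_integral.
  rewrite <- (RInt_Chasles (V := C_R_CompleteNormedModule) _ 0 (/ 2) 1)
    by (apply ex_RInt_line_integrand; auto; lra).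
  reflexivity.
Qed.

End LineIntegral.

Lemma line_integral_ext (h1 h2 : C -> C) (a b : C) :
  (forall xi, h1 xi = h2 xi) -> line_integral h1 a b = line_integral h2 a b.
Proof.
  intros E. apply (RInt_ext (V := C_R_CompleteNormedModule)). intros s _.
  unfold line_integrand. rewrite E. reflexivity.
Qed.

Lemma line_integral_plus (h1 h2 : C -> C) (a b : C) :
  continuous_disc h1 -> continuous_disc h2 -> in_disc a -> in_disc b ->
  line_integral (fun xi => h1 xi + h2 xi)%C a b = (line_integral h1 a b + line_integral h2 a b)%C.
Proof.
  intros H1 H2 Ha Hb. unfold line_integral.
  rewrite <- (RInt_plus (V := C_R_CompleteNormedModule))
    by (apply ex_RInt_line_integrand; auto; lra).
  apply (RInt_ext (V := C_R_CompleteNormedModule)). intros s _.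
  unfold line_integrand. change (plus ?x ?y) with (x + y)%C. eq_in_C. ring.
Qed.

Lemma line_integral_Cmult_l (c : C) (h : C -> C) (a b : C) :
  continuous_disc h -> in_disc a -> in_disc b ->
  line_integral (fun xi => c * h xi)%C a b = (c * line_integral h a b)%C.
Proof.
  intros Hh Ha Hb. unfold line_integral.
  rewrite <- (is_RInt_unique (V := C_R_CompleteNormedModule) _ _ _ _
                (is_RInt_Cmult_l _ _ _ c _ (RInt_correct (V := C_R_CompleteNormedModule) _ _ _
                   (ex_RInt_line_integrand h Hh a b 0 1 Ha Hb ltac:(lra) ltac:(lra))))).
  apply (RInt_ext (V := C_R_CompleteNormedModule)). intros s _.
  unfold line_integrand. eq_in_C. ring.
Qed.

Lemma line_integral_approx (h L : C -> C) (a b V : C) (M : R) :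
  @ex_RInt C_R_NormedModule (line_integrand h a b) 0 1 ->
  @is_RInt C_R_NormedModule (line_integrand L a b) 0 1 V ->
  (forall s, 0 <= s <= 1 ->
     Cmod (h (a + RtoC s * (b - a)) - L (a + RtoC s * (b - a)))%C <= M) ->
  Cmod (line_integral h a b - V) <= Cmod (b - a) * M.
Proof.
  intros Hh HL HM.
  assert (Hdiff := is_RInt_minus _ _ 0 1 _ _
                     (RInt_correct (V := C_R_CompleteNormedModule) _ _ _ Hh) HL).
  apply (norm_RInt_le_const _ _ _ _ (Cmod (b - a) * M)) in Hdiff; [| lra |].
  - rewrite <- Cmod_norm, Rminus_0_r, Rmult_1_l in Hdiff. exact Hdiff.
  - intros s Hs. rewrite <- Cmod_norm. unfold line_integrand.
    change (minus ?x ?y) with (x - y)%C.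
    replace ((b - a) * h (a + RtoC s * (b - a)) - (b - a) * L (a + RtoC s * (b - a)))%C
      with ((b - a) * (h (a + RtoC s * (b - a)) - L (a + RtoC s * (b - a))))%C by ring.
    rewrite Cmod_mult. apply Rmult_le_compat_l; [apply Cmod_ge_0 | exact (HM s Hs)].
Qed.

Definition affine_primitive (al be z : C) : C := (al * z + be * z * z / 2)%C.

Lemma is_RInt_line_affine (al be a b : C) :
  @is_RInt C_R_NormedModule (line_integrand (fun xi => al + be * xi)%C a b) 0 1
    (affine_primitive al be b - affine_primitive al be a)%C.
Proof.
  set (c0 := ((b - a) * (al + be * a))%C). set (c1 := (be * (b - a) * (b - a))%C).
  set (F := fun s : R => plus (scal s c0) (scal (s * s / 2) c1) : C_R_CompleteNormedModule).
  set (dF := fun s : R => plus c0 (scal s c1) : C_R_CompleteNormedModule).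
  assert (HF : is_RInt dF 0 1 (minus (F 1) (F 0))).
  { apply is_RInt_derive.
    - intros s _.
      assert (Hsq : is_derive (fun x : R => x * x / 2) s s) by (auto_derive; auto; field).
      assert (D := is_derive_plus _ _ s _ _ (is_derive_scal_l _ s _ c0 (is_derive_id s))
                     (is_derive_scal_l _ s _ c1 Hsq)).
      rewrite (scal_one (K := R_Ring)) in D. exact D.
    - intros s _. apply (@continuous_plus R_UniformSpace R_AbsRing C_R_NormedModule).
      + apply continuous_const.
      + apply (@continuous_scal_l R_UniformSpace R_AbsRing C_R_NormedModule), continuous_id. }
  assert (E : minus (F 1) (F 0) = (affine_primitive al be b - affine_primitive al be a)%C).
  { unfold F, affine_primitive. rewrite !scal_R_Cmult.
    change (minus ?x ?y) with (x - y)%C. change (plus ?x ?y) with (x + y)%C.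
    unfold c0, c1. rewrite !RtoC_div, !RtoC_mult by lra. eq_in_C. field. }
  rewrite <- E. apply (is_RInt_ext dF); [| exact HF].
  intros s _. unfold dF, line_integrand. rewrite scal_R_Cmult. unfold c0, c1.
  change (plus ?x ?y) with (x + y)%C. eq_in_C. ring.
Qed.

(** * Goursat's theorem for triangles *)

Definition triangle : Type := (C * C * C)%type.

Definition triangle_integral (h : C -> C) (T : triangle) : C :=
  let '(a, b, c) := T in (line_integral h a b + line_integral h b c + line_integral h c a)%C.

Definition perimeter (T : triangle) : R :=
  let '(a, b, c) := T in Cmod (b - a) + Cmod (c - b) + Cmod (a - c).

Definition first_vertex (T : triangle) : C := let '(a, _, _) := T in a.

Definition vertices_le (r : R) (T : triangle) : Prop :=
  let '(a, b, c) := T in Cmod a <= r /\ Cmod b <= r /\ Cmod c <= r.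

Definition quarter_a (T : triangle) : triangle :=
  let '(a, b, c) := T in (a, midpoint a b, midpoint c a).
Definition quarter_b (T : triangle) : triangle :=
  let '(a, b, c) := T in (midpoint a b, b, midpoint b c).
Definition quarter_c (T : triangle) : triangle :=
  let '(a, b, c) := T in (midpoint c a, midpoint b c, c).
Definition quarter_mid (T : triangle) : triangle :=
  let '(a, b, c) := T in (midpoint a b, midpoint b c, midpoint c a).

Lemma Cmod_midpoint_le (r : R) (a b : C) :
  Cmod a <= r -> Cmod b <= r -> Cmod (midpoint a b) <= r.
Proof.
  intros Ha Hb. unfold midpoint, Cdiv.
  replace ((a + b) * / 2)%C with (RtoC (/ 2) * a + RtoC (/ 2) * b)%C
    by (rewrite RtoC_inv by lra; field; exact RtoC_2_neq_0).
  eapply Rle_trans; [apply Cmod_triangle |].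
  rewrite !Cmod_mult, Cmod_R, Rabs_pos_eq by lra. lra.
Qed.

Lemma Cmod_half (x : C) : Cmod (x / 2) = Cmod x / 2.
Proof. rewrite Cmod_div, Cmod_R, Rabs_pos_eq by (lra || exact RtoC_2_neq_0). reflexivity. Qed.

Lemma vertices_le_quarters (r : R) (T : triangle) : vertices_le r T ->
  vertices_le r (quarter_a T) /\ vertices_le r (quarter_b T) /\
  vertices_le r (quarter_c T) /\ vertices_le r (quarter_mid T).
Proof.
  destruct T as [[a b] c]; simpl; intros [Ha [Hb Hc]].
  repeat split; auto; apply Cmod_midpoint_le; auto.
Qed.

Lemma perimeter_quarters (T : triangle) :
  perimeter (quarter_a T) = perimeter T / 2 /\ perimeter (quarter_b T) = perimeter T / 2 /\
  perimeter (quarter_c T) = perimeter T / 2 /\ perimeter (quarter_mid T) = perimeter T / 2.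
Proof.
  destruct T as [[a b] c]; simpl; unfold midpoint.
  assert (Hhalf : forall x y : C, (x = y / 2)%C -> Cmod x = Cmod y / 2)
    by (intros x y ->; apply Cmod_half).
  assert (Hsym : forall x y : C, Cmod (x - y) = Cmod (y - x))
    by (intros x y; rewrite <- Cmod_opp; f_equal; ring).
  repeat split.
  - rewrite (Hhalf ((a + b) / 2 - a)%C (b - a)%C), (Hhalf ((c + a) / 2 - (a + b) / 2)%C (c - b)%C),
      (Hhalf (a - (c + a) / 2)%C (a - c)%C) by field. lra.
  - rewrite (Hhalf (b - (a + b) / 2)%C (b - a)%C), (Hhalf ((b + c) / 2 - b)%C (c - b)%C),
      (Hhalf ((a + b) / 2 - (b + c) / 2)%C (a - c)%C) by field. lra.
  - rewrite (Hhalf ((b + c) / 2 - (c + a) / 2)%C (b - a)%C), (Hhalf (c - (b + c) / 2)%C (c - b)%C),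
      (Hhalf ((c + a) / 2 - c)%C (a - c)%C) by field. lra.
  - rewrite (Hhalf ((b + c) / 2 - (a + b) / 2)%C (c - a)%C),
      (Hhalf ((c + a) / 2 - (b + c) / 2)%C (a - b)%C),
      (Hhalf ((a + b) / 2 - (c + a) / 2)%C (b - c)%C) by field.
    rewrite (Hsym c a), (Hsym a b), (Hsym b c). lra.
Qed.

Lemma vertices_near_first (p a b c : C) (D : R) :
  Cmod (p - a) <= 2 * D -> perimeter (a, b, c) <= D ->
  Cmod (a - p) <= 3 * D /\ Cmod (b - p) <= 3 * D /\ Cmod (c - p) <= 3 * D.
Proof.
  simpl. intros Hpa Hper.
  pose proof (Cmod_ge_0 (b - a)). pose proof (Cmod_ge_0 (c - b)). pose proof (Cmod_ge_0 (a - c)).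
  assert (Hnear : forall z, Cmod (z - a) <= D -> Cmod (z - p) <= 3 * D).
  { intros z Hz. replace (z - p)%C with ((z - a) + - (p - a))%C by ring.
    eapply Rle_trans; [apply Cmod_triangle |]. rewrite Cmod_opp. lra. }
  repeat split; apply Hnear.
  - replace (a - a)%C with (RtoC 0) by ring. rewrite Cmod_0. lra.
  - lra.
  - rewrite <- Cmod_opp. replace (- (c - a))%C with (a - c)%C by ring. lra.
Qed.

Section Goursat.

Variable h : C -> C.
Hypothesis h_holo : holo_disc h.

Let h_cont : continuous_disc h := holo_disc_continuous h h_holo.

Definition larger_integral (T1 T2 : triangle) : triangle :=
  if Rle_dec (Cmod (triangle_integral h T1)) (Cmod (triangle_integral h T2)) then T2 else T1.

Definition worst_quarter (T : triangle) : triangle :=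
  larger_integral (larger_integral (quarter_a T) (quarter_b T))
                  (larger_integral (quarter_c T) (quarter_mid T)).

Lemma larger_integral_ge (T1 T2 : triangle) :
  Cmod (triangle_integral h T1) <= Cmod (triangle_integral h (larger_integral T1 T2)) /\
  Cmod (triangle_integral h T2) <= Cmod (triangle_integral h (larger_integral T1 T2)).
Proof. unfold larger_integral; destruct Rle_dec; lra. Qed.

Lemma worst_quarter_ind (P : triangle -> Prop) (T : triangle) :
  P (quarter_a T) -> P (quarter_b T) -> P (quarter_c T) -> P (quarter_mid T) ->
  P (worst_quarter T).
Proof. intros. unfold worst_quarter, larger_integral. repeat destruct Rle_dec; auto. Qed.

Lemma triangle_integral_quarters (T : triangle) (r : R) : r < 1 -> vertices_le r T ->
  triangle_integral h T =
  (triangle_integral h (quarter_a T) + triangle_integral h (quarter_b T) +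
   triangle_integral h (quarter_c T) + triangle_integral h (quarter_mid T))%C.
Proof.
  destruct T as [[a b] c]; simpl; intros Hr [Ha [Hb Hc]].
  assert (Hdisc : forall z, Cmod z <= r -> in_disc z) by (unfold in_disc; intros; lra).
  assert (Hab := Cmod_midpoint_le r a b Ha Hb).
  assert (Hbc := Cmod_midpoint_le r b c Hb Hc).
  assert (Hca := Cmod_midpoint_le r c a Hc Ha).
  rewrite (line_integral_midpoint h h_cont a b), (line_integral_midpoint h h_cont b c),
    (line_integral_midpoint h h_cont c a),
    (line_integral_swap h h_cont (midpoint c a) (midpoint a b)),
    (line_integral_swap h h_cont (midpoint b c) (midpoint a b)),
    (line_integral_swap h h_cont (midpoint b c) (midpoint c a)) by auto.
  ring.
Qed.

Lemma triangle_integral_le_worst_quarter (T : triangle) (r : R) : r < 1 -> vertices_le r T ->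
  Cmod (triangle_integral h T) <= 4 * Cmod (triangle_integral h (worst_quarter T)).
Proof.
  intros Hr HT. rewrite (triangle_integral_quarters T r Hr HT).
  unfold worst_quarter.
  destruct (larger_integral_ge (quarter_a T) (quarter_b T)) as [Ha Hb].
  destruct (larger_integral_ge (quarter_c T) (quarter_mid T)) as [Hc Hm].
  destruct (larger_integral_ge (larger_integral (quarter_a T) (quarter_b T))
                               (larger_integral (quarter_c T) (quarter_mid T))) as [Hab Hcm].
  pose proof (Cmod_triangle (triangle_integral h (quarter_a T) + triangle_integral h (quarter_b T)
                 + triangle_integral h (quarter_c T)) (triangle_integral h (quarter_mid T))).
  pose proof (Cmod_triangle (triangle_integral h (quarter_a T) + triangle_integral h (quarter_b T))
                 (triangle_integral h (quarter_c T))).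
  pose proof (Cmod_triangle (triangle_integral h (quarter_a T))
                            (triangle_integral h (quarter_b T))).
  lra.
Qed.

Fixpoint goursat_seq (T : triangle) (n : nat) : triangle :=
  match n with O => T | S m => worst_quarter (goursat_seq T m) end.

Lemma goursat_seq_vertices_le (r : R) (T : triangle) (n : nat) :
  vertices_le r T -> vertices_le r (goursat_seq T n).
Proof.
  intros HT. induction n as [|n IH]; simpl; [exact HT |].
  destruct (vertices_le_quarters r _ IH) as [? [? [? ?]]]. apply worst_quarter_ind; auto.
Qed.

Lemma perimeter_goursat_seq (T : triangle) (n : nat) :
  perimeter (goursat_seq T n) = perimeter T * (/ 2) ^ n.
Proof.
  induction n as [|n IH]; simpl; [ring |].
  destruct (perimeter_quarters (goursat_seq T n)) as [? [? [? ?]]].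
  replace (perimeter T * (/ 2 * (/ 2) ^ n)) with (perimeter (goursat_seq T n) / 2)
    by (rewrite IH; field).
  apply worst_quarter_ind; assumption.
Qed.

Lemma triangle_integral_goursat_seq (T : triangle) (r : R) (n : nat) :
  r < 1 -> vertices_le r T ->
  Cmod (triangle_integral h T) <= 4 ^ n * Cmod (triangle_integral h (goursat_seq T n)).
Proof.
  intros Hr HT. induction n as [|n IH]; simpl; [lra |].
  pose proof (triangle_integral_le_worst_quarter _ r Hr (goursat_seq_vertices_le r T n HT)).
  assert (0 <= 4 ^ n) by (apply pow_le; lra). nra.
Qed.

Lemma first_vertex_worst_quarter (T : triangle) :
  Cmod (first_vertex (worst_quarter T) - first_vertex T) <= perimeter T.
Proof.
  destruct T as [[a b] c]. unfold perimeter.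
  pose proof (Cmod_ge_0 (b - a)). pose proof (Cmod_ge_0 (c - b)). pose proof (Cmod_ge_0 (a - c)).
  apply worst_quarter_ind; simpl; unfold midpoint.
  - replace (a - a)%C with (RtoC 0) by ring. rewrite Cmod_0. lra.
  - replace ((a + b) / 2 - a)%C with ((b - a) / 2)%C by field. rewrite Cmod_half. lra.
  - replace ((c + a) / 2 - a)%C with (- ((a - c) / 2))%C by field.
    rewrite Cmod_opp, Cmod_half. lra.
  - replace ((a + b) / 2 - a)%C with ((b - a) / 2)%C by field. rewrite Cmod_half. lra.
Qed.

Lemma goursat_limit_point (T : triangle) (r : R) : r < 1 -> vertices_le r T ->
  exists p, in_disc p /\
    forall n, Cmod (p - first_vertex (goursat_seq T n)) <= 2 * perimeter T * (/ 2) ^ n.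
Proof.
  intros Hr HT.
  destruct (geometric_cauchy_C (fun n => first_vertex (goursat_seq T n)) (perimeter T)) as [p Hp].
  { intros n. rewrite <- perimeter_goursat_seq. apply first_vertex_worst_quarter. }
  exists p. split; [| exact Hp].
  destruct (exists_pow_half_lt (2 * perimeter T) (1 - r)) as [n Hn]; [lra |].
  specialize (Hp n).
  assert (Hfirst : Cmod (first_vertex (goursat_seq T n)) <= r).
  { pose proof (goursat_seq_vertices_le r T n HT) as Hv.
    destruct (goursat_seq T n) as [[a b] c]. simpl in *. tauto. }
  unfold in_disc.
  replace p with ((p - first_vertex (goursat_seq T n)) + first_vertex (goursat_seq T n))%C
    by ring.
  pose proof (Cmod_triangle (p - first_vertex (goursat_seq T n)) (first_vertex (goursat_seq T n))).
  lra.
Qed.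

(* The tangent map [h p + (xi - p) d] has a primitive, so its integral around the triangle
   vanishes, and h differs from it by at most [eps * R] on the triangle. *)
Lemma triangle_integral_near (p d : C) (eps R : R) (a b c : C) :
  in_disc a -> in_disc b -> in_disc c -> 0 <= eps ->
  (forall xi, Cmod (xi - p) <= R -> Cmod (h xi - h p - (xi - p) * d) <= eps * Cmod (xi - p)) ->
  Cmod (a - p) <= R -> Cmod (b - p) <= R -> Cmod (c - p) <= R ->
  Cmod (triangle_integral h (a, b, c)) <= perimeter (a, b, c) * (eps * R).
Proof.
  intros Ha Hb Hc He Hder Hap Hbp Hcp.
  set (Phi := affine_primitive (h p - p * d) d).
  assert (Hside : forall x y, in_disc x -> in_disc y -> Cmod (x - p) <= R -> Cmod (y - p) <= R ->
             Cmod (line_integral h x y - (Phi y - Phi x)) <= Cmod (y - x) * (eps * R)).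
  { intros x y Hx Hy Hxp Hyp.
    apply (line_integral_approx h (fun xi => (h p - p * d) + d * xi)%C).
    - apply ex_RInt_line_integrand; auto; lra.
    - apply is_RInt_line_affine.
    - intros s Hs. set (xi := (x + RtoC s * (y - x))%C).
      assert (Hxi : Cmod (xi - p) <= R) by (apply Cmod_segment_le; auto).
      replace (h xi - (h p - p * d + d * xi))%C with (h xi - h p - (xi - p) * d)%C by ring.
      eapply Rle_trans; [exact (Hder xi Hxi) | apply Rmult_le_compat_l; assumption]. }
  simpl.
  replace (line_integral h a b + line_integral h b c + line_integral h c a)%C with
    ((line_integral h a b - (Phi b - Phi a)) + (line_integral h b c - (Phi c - Phi b))
     + (line_integral h c a - (Phi a - Phi c)))%C by ring.
  pose proof (Hside a b Ha Hb Hap Hbp). pose proof (Hside b c Hb Hc Hbp Hcp).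
  pose proof (Hside c a Hc Ha Hcp Hap).
  pose proof (Cmod_triangle (line_integral h a b - (Phi b - Phi a) +
                             (line_integral h b c - (Phi c - Phi b)))
                            (line_integral h c a - (Phi a - Phi c))).
  pose proof (Cmod_triangle (line_integral h a b - (Phi b - Phi a))
                            (line_integral h b c - (Phi c - Phi b))).
  lra.
Qed.

(* |int_T h| <= 4^n |int_(T_n) h|, and near the limit point |int_(T_n) h| is at most
   eps * 3 perimeter(T_n)^2 = eps * 3 perimeter(T)^2 / 4^n. *)
Lemma triangle_integral_le_eps (T : triangle) (r : R) : r < 1 -> vertices_le r T ->
  forall eps, 0 < eps -> Cmod (triangle_integral h T) <= eps * (3 * perimeter T ^ 2).
Proof.
  intros Hr HT eps He. set (P := perimeter T).
  destruct (goursat_limit_point T r Hr HT) as [p [Hp Hclose]].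
  destruct (h_holo p Hp) as [d Hd]. rewrite is_derive_C_iff in Hd.
  destruct (Hd eps He) as [delta [Hdelta Hder]].
  destruct (exists_pow_half_lt (3 * P) delta Hdelta) as [n Hn].
  set (D := P * (/ 2) ^ n).
  assert (HD : 3 * D < delta) by (unfold D; lra).
  pose proof (triangle_integral_goursat_seq T r n Hr HT) as Hscale.
  pose proof (perimeter_goursat_seq T n) as Hper. fold P D in Hper.
  pose proof (goursat_seq_vertices_le r T n HT) as Hv.
  specialize (Hclose n). fold P in Hclose.
  replace (2 * P * (/ 2) ^ n) with (2 * D) in Hclose by (unfold D; ring).
  destruct (goursat_seq T n) as [[a b] c]. simpl in Hv, Hclose. destruct Hv as [Ha [Hb Hc]].
  destruct (vertices_near_first p a b c D Hclose (Req_le _ _ Hper)) as [Hpa [Hpb Hpc]].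
  assert (Hdisc : forall z, Cmod z <= r -> in_disc z) by (unfold in_disc; intros; lra).
  pose proof (triangle_integral_near p d eps (3 * D) a b c (Hdisc a Ha) (Hdisc b Hb)
                (Hdisc c Hc) (Rlt_le _ _ He) (fun xi Hxi => Hder xi ltac:(lra)) Hpa Hpb Hpc)
    as Hest.
  rewrite Hper in Hest.
  assert (Hpow : 0 <= 4 ^ n) by (apply pow_le; lra).
  apply (Rmult_le_compat_l _ _ _ Hpow) in Hest.
  replace (4 ^ n * (D * (eps * (3 * D)))) with (eps * (3 * P ^ 2) * (4 * / 2 * / 2) ^ n) in Hest
    by (unfold D; rewrite !Rpow_mult_distr; ring).
  replace (4 * / 2 * / 2) with 1 in Hest by field. rewrite pow1 in Hest. lra.
Qed.

Theorem goursat (a b c : C) :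
  in_disc a -> in_disc b -> in_disc c -> triangle_integral h (a, b, c) = 0%C.
Proof.
  intros Ha Hb Hc.
  set (T := (a, b, c)). set (K := 3 * perimeter T ^ 2).
  set (r := Rmax (Cmod a) (Rmax (Cmod b) (Cmod c))).
  assert (Hr : r < 1) by (unfold r; repeat apply Rmax_lub_lt; assumption).
  assert (HT : vertices_le r T).
  { unfold r; simpl; repeat split;
      [apply Rmax_l | eapply Rle_trans; [| apply Rmax_r]; apply Rmax_l
      | eapply Rle_trans; [| apply Rmax_r]; apply Rmax_r]. }
  apply Cmod_eq_0, Rle_antisym; [| apply Cmod_ge_0].
  apply Rle_plus_epsilon. intros e He.
  assert (HK : 0 <= K) by (unfold K; pose proof (pow2_ge_0 (perimeter T)); lra).
  assert (He' : 0 < e / (K + 1)) by (apply Rdiv_lt_0_compat; lra).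
  apply (Rle_trans _ _ _ (triangle_integral_le_eps T r Hr HT _ He')). fold K.
  apply Rle_trans with ((K + 1) * (e / (K + 1))); [nra | right; field; lra].
Qed.

End Goursat.

(** * Means along radii *)

Definition segment_mean (h : C -> C) (z : C) : C :=
  if Req_EM_T (Cmod z) 0 then h 0%C else (/ z * line_integral h 0 z)%C.

Lemma segment_mean_0 (h : C -> C) : segment_mean h 0%C = h 0%C.
Proof.
  unfold segment_mean. destruct Req_EM_T as [_ | E]; [reflexivity |].
  rewrite Cmod_0 in E. lra.
Qed.

Lemma segment_mean_neq_0 (h : C -> C) (z : C) :
  z <> 0%C -> segment_mean h z = (/ z * line_integral h 0 z)%C.
Proof.
  intros Hz. unfold segment_mean. destruct Req_EM_T as [E | _]; [| reflexivity].
  apply Cmod_eq_0 in E. contradiction.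
Qed.

Section Primitive.

Variable h : C -> C.
Hypothesis h_holo : holo_disc h.

Lemma line_integral_chasles (w z : C) : in_disc w -> in_disc z ->
  line_integral h 0 z = (line_integral h 0 w + line_integral h w z)%C.
Proof.
  intros Hw Hz.
  pose proof (goursat h h_holo 0 w z in_disc_0 Hw Hz) as G. simpl in G.
  rewrite (line_integral_swap h (holo_disc_continuous h h_holo) 0 z) in G
    by auto using in_disc_0.
  replace (line_integral h 0 z) with
    (line_integral h 0 w + line_integral h w z
     - (line_integral h 0 w + line_integral h w z + - line_integral h 0 z))%C by ring.
  rewrite G. ring.
Qed.

Lemma is_derive_line_integral (w : C) : in_disc w ->
  @is_derive C_AbsRing C_NormedModule (fun z => line_integral h 0 z) w (h w).
Proof.
  intros Hw. apply is_derive_C_iff. intros e He.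
  destruct (continuous_C_Cmod h w (holo_disc_continuous h h_holo w Hw) e He)
    as [d [Hd Hcont]].
  unfold in_disc in Hw.
  exists (Rmin d (1 - Cmod w)). split; [apply Rmin_pos; lra |].
  intros z Hz.
  assert (Hzd : Cmod (z - w) < d) by (eapply Rlt_le_trans; [exact Hz | apply Rmin_l]).
  assert (Hz1 : in_disc z).
  { assert (Cmod (z - w) < 1 - Cmod w) by (eapply Rlt_le_trans; [exact Hz | apply Rmin_r]).
    unfold in_disc. replace z with ((z - w) + w)%C by ring.
    eapply Rle_lt_trans; [apply Cmod_triangle | lra]. }
  rewrite (line_integral_chasles w z Hw Hz1).
  replace (line_integral h 0 w + line_integral h w z - line_integral h 0 w - (z - w) * h w)%C
    with (line_integral h w z
          - (affine_primitive (h w) 0 z - affine_primitive (h w) 0 w))%C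
    by (unfold affine_primitive; field).
  rewrite Rmult_comm. apply (line_integral_approx h (fun xi => h w + 0 * xi)%C).
  - apply ex_RInt_line_integrand; auto using holo_disc_continuous; lra.
  - apply is_RInt_line_affine.
  - intros s Hs. replace (h (w + RtoC s * (z - w)) - (h w + 0 * (w + RtoC s * (z - w))))%C
      with (h (w + RtoC s * (z - w)) - h w)%C by ring.
    apply Rlt_le, Hcont.
    replace (w + RtoC s * (z - w) - w)%C with (RtoC s * (z - w))%C by ring.
    rewrite Cmod_mult, Cmod_R, Rabs_pos_eq by lra.
    pose proof (Cmod_ge_0 (z - w)). nra.
Qed.

Lemma is_derive_segment_mean_0 (d : C) :
  @is_derive C_AbsRing C_NormedModule h (RtoC 0) d ->
  @is_derive C_AbsRing C_NormedModule (segment_mean h) (RtoC 0) (d / 2)%C.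
Proof.
  rewrite !is_derive_C_iff. intros Hd e He.
  destruct (Hd e He) as [delta [Hdelta Hder]].
  exists (Rmin delta 1). split; [apply Rmin_pos; lra |].
  intros y Hy. replace (y - 0)%C with y in * by ring.
  assert (Hyd : Cmod y < delta) by (eapply Rlt_le_trans; [exact Hy | apply Rmin_l]).
  assert (Hy1 : in_disc y) by (unfold in_disc; eapply Rlt_le_trans; [exact Hy | apply Rmin_r]).
  destruct (Ceq_dec y 0) as [-> | Hy0].
  - rewrite Cmod_0. replace (segment_mean h 0 - segment_mean h 0 - 0 * (d / 2))%C with (RtoC 0)
      by ring. rewrite Cmod_0. lra.
  - rewrite segment_mean_neq_0, segment_mean_0 by exact Hy0.
    (* the tangent map [h 0 + d xi] has mean [h 0 + d y / 2] over [0, y] *)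
    replace (/ y * line_integral h 0 y - h 0 - y * (d / 2))%C with
      (/ y * (line_integral h 0 y
              - (affine_primitive (h 0) d y - affine_primitive (h 0) d 0)))%C
      by (unfold affine_primitive; field; exact Hy0).
    rewrite Cmod_mult, Cmod_inv by exact Hy0.
    assert (HY : 0 < Cmod y) by (apply Cmod_gt_0; exact Hy0).
    assert (Hbound : Cmod (line_integral h 0 y
                           - (affine_primitive (h 0) d y - affine_primitive (h 0) d 0))
                     <= Cmod (y - 0) * (e * Cmod y)).
    { apply (line_integral_approx h (fun xi => h 0 + d * xi)%C).
      - apply ex_RInt_line_integrand; auto using holo_disc_continuous, in_disc_0; lra.
      - apply is_RInt_line_affine.
      - intros s Hs. set (xi := (0 + RtoC s * (y - 0))%C).
        assert (Hxi : Cmod xi <= Cmod y).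
        { unfold xi. replace (0 + RtoC s * (y - 0))%C with (RtoC s * y)%C by ring.
          rewrite Cmod_mult, Cmod_R, Rabs_pos_eq by lra. nra. }
        replace (h xi - (h 0 + d * xi))%C with (h xi - h 0 - (xi - 0) * d)%C by ring.
        eapply Rle_trans; [apply Hder; replace (xi - 0)%C with xi by ring; lra |].
        replace (xi - 0)%C with xi by ring. apply Rmult_le_compat_l; lra. }
    replace (y - 0)%C with y in Hbound by ring.
    apply Rle_trans with (/ Cmod y * (Cmod y * (e * Cmod y))).
    + apply Rmult_le_compat_l; [left; apply Rinv_0_lt_compat |]; assumption.
    + right. field. lra.
Qed.

Lemma ex_derive_segment_mean_neq_0 (z : C) : in_disc z -> z <> 0%C ->
  @ex_derive C_AbsRing C_NormedModule (segment_mean h) z.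
Proof.
  intros Hz Hz0.
  assert (Hprod := is_derive_mult Cinv (fun y => line_integral h 0 y) z _ _
                     (proj1 (is_derive_C_AbsRing_iff _ _ _) (is_derive_Cinv z Hz0))
                     (proj1 (is_derive_C_AbsRing_iff _ _ _) (is_derive_line_integral z Hz))
                     Cmult_comm).
  eexists. apply is_derive_C_AbsRing_iff. eapply is_derive_ext_loc; [| exact Hprod].
  assert (HZ : 0 < Cmod z) by (apply Cmod_gt_0; exact Hz0).
  exists (mkposreal _ HZ). intros y Hy. change (Cmod (y - z) < Cmod z) in Hy.
  symmetry. apply segment_mean_neq_0. intros ->.
  replace (0 - z)%C with (- z)%C in Hy by ring. rewrite Cmod_opp in Hy. lra.
Qed.

Lemma holo_segment_mean : holo_disc (segment_mean h).
Proof.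
  intros z Hz. destruct (Ceq_dec z 0) as [-> | Hz0].
  - destruct (h_holo 0%C in_disc_0) as [d Hd].
    exists (d / 2)%C. exact (is_derive_segment_mean_0 d Hd).
  - exact (ex_derive_segment_mean_neq_0 z Hz Hz0).
Qed.

End Primitive.

Lemma segment_mean_ext (h1 h2 : C -> C) (z : C) :
  (forall xi, h1 xi = h2 xi) -> segment_mean h1 z = segment_mean h2 z.
Proof.
  intros E. unfold segment_mean. rewrite (line_integral_ext h1 h2 0 z E), E. reflexivity.
Qed.

Lemma segment_mean_plus (h1 h2 : C -> C) (z : C) :
  continuous_disc h1 -> continuous_disc h2 -> in_disc z ->
  segment_mean (fun xi => h1 xi + h2 xi)%C z = (segment_mean h1 z + segment_mean h2 z)%C.
Proof.
  intros H1 H2 Hz. destruct (Ceq_dec z 0) as [-> | Hz0].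
  - rewrite !segment_mean_0. reflexivity.
  - rewrite !segment_mean_neq_0, line_integral_plus by auto using in_disc_0. ring.
Qed.

Lemma segment_mean_Cmult_l (c : C) (h : C -> C) (z : C) :
  continuous_disc h -> in_disc z ->
  segment_mean (fun xi => c * h xi)%C z = (c * segment_mean h z)%C.
Proof.
  intros Hh Hz. destruct (Ceq_dec z 0) as [-> | Hz0].
  - rewrite !segment_mean_0. reflexivity.
  - rewrite !segment_mean_neq_0, line_integral_Cmult_l by auto using in_disc_0. ring.
Qed.

Lemma segment_mean_sub_le (h1 h2 : C -> C) (z : C) (M : R) :
  continuous_disc h1 -> continuous_disc h2 -> in_disc z ->
  (forall xi, Cmod xi <= Cmod z -> Cmod (h1 xi - h2 xi) <= M) ->
  Cmod (segment_mean h1 z - segment_mean h2 z) <= M.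
Proof.
  intros H1 H2 Hz HM. destruct (Ceq_dec z 0) as [-> | Hz0].
  - rewrite !segment_mean_0. apply HM. lra.
  - rewrite !segment_mean_neq_0 by exact Hz0.
    assert (Hbound : Cmod (line_integral h1 0 z - line_integral h2 0 z) <= Cmod (z - 0) * M).
    { apply (line_integral_approx h1 h2).
      - apply ex_RInt_line_integrand; auto using in_disc_0; lra.
      - apply (RInt_correct (V := C_R_CompleteNormedModule)).
        apply ex_RInt_line_integrand; auto using in_disc_0; lra.
      - intros s Hs. apply HM.
        replace (0 + RtoC s * (z - 0))%C with (RtoC s * z)%C by ring.
        rewrite Cmod_mult, Cmod_R, Rabs_pos_eq by lra.
        pose proof (Cmod_ge_0 z). nra. }
    replace (z - 0)%C with z in Hbound by ring.
    replace (/ z * line_integral h1 0 z - / z * line_integral h2 0 z)%C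
      with (/ z * (line_integral h1 0 z - line_integral h2 0 z))%C by ring.
    assert (HZ : 0 < Cmod z) by (apply Cmod_gt_0; exact Hz0).
    rewrite Cmod_mult, Cmod_inv by exact Hz0.
    apply Rle_trans with (/ Cmod z * (Cmod z * M)).
    + apply Rmult_le_compat_l; [left; apply Rinv_0_lt_compat |]; assumption.
    + right. field. lra.
Qed.

(** * The Cesaro operators *)

Definition cesaro_integrand (t : R) (f : C -> C) (xi : C) : C := (f xi / (1 - RtoC t * xi))%C.

Lemma cesaro_denominator_ge (t : R) (xi : C) :
  0 <= t < 1 -> 1 - Cmod xi <= Cmod (1 - RtoC t * xi).
Proof.
  intros Ht.
  assert (E : Cmod (RtoC 1) <= Cmod (1 - RtoC t * xi) + Cmod (RtoC t * xi)).
  { replace (RtoC 1) with ((1 - RtoC t * xi) + RtoC t * xi)%C at 1 by ring.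
    apply Cmod_triangle. }
  rewrite Cmod_mult, !Cmod_R, Rabs_R1, Rabs_pos_eq in E by lra.
  pose proof (Cmod_ge_0 xi). nra.
Qed.

Lemma cesaro_denominator_neq_0 (t : R) (xi : C) :
  0 <= t < 1 -> in_disc xi -> (1 - RtoC t * xi)%C <> 0%C.
Proof.
  intros Ht Hxi. apply Cmod_gt_0. pose proof (cesaro_denominator_ge t xi Ht).
  unfold in_disc in Hxi. lra.
Qed.

Lemma holo_cesaro_integrand (t : R) (f : C -> C) :
  0 <= t < 1 -> holo_disc f -> holo_disc (cesaro_integrand t f).
Proof.
  intros Ht Hf z Hz. destruct (Hf z Hz) as [df Hdf].
  set (q := fun xi : C => (1 - RtoC t * xi)%C).
  assert (Hq : @is_derive C_AbsRing C_NormedModule q z (- RtoC t)%C).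
  { apply is_derive_C_iff. intros e He. exists 1. split; [lra |]. intros y _.
    unfold q. replace (1 - RtoC t * y - (1 - RtoC t * z) - (y - z) * - RtoC t)%C with (RtoC 0)
      by ring.
    rewrite Cmod_0. pose proof (Cmod_ge_0 (y - z)). nra. }
  assert (Hinv := @is_derive_comp C_AbsRing (AbsRing_NormedModule C_AbsRing) Cinv q z _ _
                    (proj1 (is_derive_C_AbsRing_iff _ _ _)
                       (is_derive_Cinv (q z) (cesaro_denominator_neq_0 t z Ht Hz)))
                    (proj1 (is_derive_C_AbsRing_iff _ _ _) Hq)).
  eexists. apply is_derive_C_AbsRing_iff.
  exact (is_derive_mult f (fun xi => Cinv (q xi)) z _ _
           (proj1 (is_derive_C_AbsRing_iff _ _ _) Hdf) Hinv Cmult_comm).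
Qed.

Lemma cesaro_segment_mean (t : R) (f : C -> C) (z : C) :
  cesaro t f z = segment_mean (cesaro_integrand t f) z.
Proof.
  unfold cesaro, segment_mean, cesaro_integrand. destruct Req_EM_T.
  - replace (1 - RtoC t * 0)%C with (RtoC 1) by ring. field.
  - f_equal. apply (RInt_ext (V := C_R_CompleteNormedModule)). intros s _.
    unfold line_integrand. replace (0 + RtoC s * (z - 0))%C with (RtoC s * z)%C by ring.
    eq_in_C. ring.
Qed.

Lemma holo_cesaro (t : R) (f : C -> C) :
  0 <= t < 1 -> holo_disc f -> holo_disc (cesaro t f).
Proof.
  intros Ht Hf z Hz.
  destruct (holo_segment_mean _ (holo_cesaro_integrand t f Ht Hf) z Hz) as [d Hd].
  exists d. apply (is_derive_ext (segment_mean (cesaro_integrand t f))); [| exact Hd].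
  intros y. symmetry. apply cesaro_segment_mean.
Qed.

Lemma cesaro_linear (t : R) : 0 <= t < 1 -> linear_HD (cesaro t).
Proof.
  intros Ht.
  assert (Hc : forall f, holo_disc f -> continuous_disc (cesaro_integrand t f))
    by (intros f Hf; apply holo_disc_continuous, holo_cesaro_integrand; assumption).
  split.
  - intros f g Hf Hg z Hz. rewrite !cesaro_segment_mean, <- segment_mean_plus by auto.
    apply segment_mean_ext. intros xi. unfold cesaro_integrand, Cdiv. ring.
  - intros a f Hf z Hz. rewrite !cesaro_segment_mean, <- segment_mean_Cmult_l by auto.
    apply segment_mean_ext. intros xi. unfold cesaro_integrand, Cdiv. ring.
Qed.

Lemma cesaro_const_0 (t : R) (z : C) : cesaro t (fun _ => 0%C) z = 0%C.
Proof.
  unfold cesaro, seg_integral. destruct Req_EM_T; [reflexivity |].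
  rewrite (RInt_ext (V := C_R_CompleteNormedModule) _ (fun _ => zero))
    by (intros s _; change (@eq C (z * (0 / (1 - RtoC t * (RtoC s * z))))%C (RtoC 0));
        unfold Cdiv; ring).
  rewrite RInt_const, (scal_zero_r (V := C_R_CompleteNormedModule)).
  change (@eq C (/ z * RtoC 0)%C (RtoC 0)). ring.
Qed.

Lemma cesaro_sub_le (t r : R) (f g : C -> C) (M : R) (z : C) :
  0 <= t < 1 -> r < 1 -> holo_disc f -> holo_disc g ->
  (forall xi, Cmod xi <= r -> Cmod (g xi - f xi) <= M) -> Cmod z <= r ->
  Cmod (cesaro t g z - cesaro t f z) <= M / (1 - r).
Proof.
  intros Ht Hr Hf Hg HM Hz. rewrite !cesaro_segment_mean.
  apply segment_mean_sub_le;
    [apply holo_disc_continuous, holo_cesaro_integrand; auto .. | unfold in_disc; lra |].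
  intros xi Hxi.
  assert (Hxr : Cmod xi <= r) by lra.
  assert (Hq := cesaro_denominator_ge t xi Ht).
  assert (Hq0 := cesaro_denominator_neq_0 t xi Ht ltac:(unfold in_disc; lra)).
  unfold cesaro_integrand.
  replace (g xi / (1 - RtoC t * xi) - f xi / (1 - RtoC t * xi))%C
    with ((g xi - f xi) / (1 - RtoC t * xi))%C by (field; exact Hq0).
  rewrite Cmod_div by exact Hq0.
  apply Rmult_le_compat; [apply Cmod_ge_0 | left; apply Rinv_0_lt_compat; lra
                         | apply HM, Hxr | apply Rinv_le_contravar; lra].
Qed.

Definition unif_ball (f : C -> C) (r eps : R) (g : C -> C) : Prop :=
  forall z, Cmod z <= r -> Cmod (g z - f z) <= eps.

Lemma hd_nbhd_unif_ball (f : C -> C) (r eps : R) :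
  0 <= r < 1 -> 0 < eps -> hd_nbhd f (unif_ball f r eps).
Proof. intros Hr He. exists r, eps. repeat split; auto; lra. Qed.

Lemma cesaro_unif_ball (t r eps : R) (f g : C -> C) :
  0 <= t < 1 -> 0 <= r < 1 -> holo_disc f -> holo_disc g ->
  unif_ball f r (eps * (1 - r)) g -> unif_ball (cesaro t f) r eps (cesaro t g).
Proof.
  intros Ht Hr Hf Hg Hfg z Hz.
  replace eps with (eps * (1 - r) / (1 - r)) by (field; lra).
  exact (cesaro_sub_le t r f g _ z Ht (proj2 Hr) Hf Hg Hfg Hz).
Qed.

Theorem proposition2p1 :
  (forall t : R, 0 <= t < 1 ->
     maps_HD (cesaro t) /\ linear_HD (cesaro t) /\ continuous_HD (cesaro t)) /\
  equicontinuous_HD R (fun t : R => 0 <= t < 1) cesaro.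
Proof.
  split.
  - intros t Ht. split; [| split].
    + intros f Hf. exact (holo_cesaro t f Ht Hf).
    + exact (cesaro_linear t Ht).
    + intros f Hf V [r [eps [Hr [He HV]]]].
      exists (unif_ball f r (eps * (1 - r))).
      split; [apply hd_nbhd_unif_ball; [| apply Rmult_lt_0_compat]; lra |].
      intros g Hg Hfg. apply HV; [exact (holo_cesaro t g Ht Hg) |].
      exact (cesaro_unif_ball t r eps f g Ht Hr Hf Hg Hfg).
  - intros V [r [eps [Hr [He HV]]]].
    exists (unif_ball (fun _ => 0%C) r (eps * (1 - r))).
    split; [apply hd_nbhd_unif_ball; [| apply Rmult_lt_0_compat]; lra |].
    intros t g Ht Hg H0g. apply HV; [exact (holo_cesaro t g Ht Hg) |].
    intros z Hz. rewrite <- (cesaro_const_0 t z).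
    exact (cesaro_unif_ball t r eps _ g Ht Hr holo_disc_const_0 Hg H0g z Hz).
Qed.
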